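(* Let $(t_j^i)_{0\le j\le i}$ be real numbers and let $h_{j,k}^i$ ($0\le k\le i$, $0\le j\le i-k$) be defined by $h_{j,0}^i=t_j^i$ and $h_{j,k}^i=h_{j,k-1}^{i-1}+h_{j,k-1}^{i}+h_{j+1,k-1}^{i}$ for $k\ge 1$. Define the tetrahedron coefficient transform $b_n=\sum_{i=0}^{n}\sum_{j=0}^{i}\binom{n}{j,\,n-i,\,i-j}t_j^i$. Then $h_{0,n}^n=b_n$ for every $n\ge 0$.
   Context: For non-negative integers $p,q,r$ with $p+q+r=n$, $\binom{n}{p,q,r}=\frac{n!}{p!\,q!\,r!}$ denotes the tetrahedron trinomial coefficient. *)

From HB Require Import structures.
From mathcomp Require Import all_boot all_order all_algebra.
From mathcomp Require Import reals.
Set Implicit Arguments. Unset Strict Implicit. Unset Printing Implicit Defensive.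
Import Order.TTheory GRing.Theory Num.Theory.
Local Open Scope ring_scope.

Definition trinom (n p q r : nat) : nat := (n`! %/ (p`! * q`! * r`!))%N.

(* t i j stands for t_j^i ;  hh t k i j stands for h_{j,k}^i *)
Fixpoint hh (R : realType) (t : nat -> nat -> R) (k i j : nat) : R :=
  match k with
  | 0 => t i j
  | k'.+1 => hh t k' i.-1 j + hh t k' i j + hh t k' i j.+1
  end.

Definition bcoef (R : realType) (t : nat -> nat -> R) (n : nat) : R :=
  \sum_(0 <= i < n.+1) \sum_(0 <= j < i.+1) (trinom n j (n - i) (i - j))%:R * t i j.

(* Unfolding the recurrence k times, h_{j,k}^i is a sum of t_{j+c}^{i-a} over the 3^k words in
   the steps "i - 1", "stay", "j + 1", and exactly C(k,a) C(k-a,c) = k!/(a! c! (k-a-c)!) words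
   contain a steps of the first kind and c of the last.  For k = i = n and j = 0, substituting
   i := n - a turns this closed form into b_n. *)
From HB Require Import structures.
From mathcomp Require Import all_boot all_order all_algebra.
From mathcomp Require Import reals ring.
Set Implicit Arguments. Unset Strict Implicit. Unset Printing Implicit Defensive.
Local Open Scope ring_scope.
Import GRing.Theory.

Definition tetra (k a c : nat) : nat := ('C(k, a) * 'C(k - a, c))%N.

Lemma tetraS k a c :
  tetra k.+1 a c = ((if a is a'.+1 then tetra k a' c else 0) + tetra k a c
                    + (if c is c'.+1 then tetra k a c' else 0))%N.
Proof.
rewrite /tetra; case: a => [|a]; case: c => [|c];
  rewrite ?bin0 ?subn0 ?binS ?muln1 ?mul1n ?addn0 ?add0n ?subSS //; first exact: addnC.
rewrite (addnC 'C(k, a.+1)) mulnDl -addnA; congr addn.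
have [le_ka | lt_ak] := leqP k a.
  by rewrite (@bin_small k a.+1) ?ltnS // !mul0n.
by rewrite -(subnSK lt_ak) binS mulnDr.
Qed.

Lemma tetra_small_l k a c : (k < a)%N -> tetra k a c = 0%N.
Proof. by move=> lt_ka; rewrite /tetra bin_small. Qed.

Lemma tetra_small_r k a c : (k < c)%N -> tetra k a c = 0%N.
Proof.
by move=> lt_kc; rewrite /tetra (@bin_small (k - a)) ?muln0 // (leq_ltn_trans (leq_subr a k)).
Qed.

Lemma tetra_fact a b c : (tetra (c + a + b) a c * (c`! * a`! * b`!))%N = (c + a + b)`!.
Proof.
have le_a : (a <= c + a + b)%N by rewrite -addnA addnCA leq_addr.
have le_c : (c <= c + a + b - a)%N by rewrite addnAC addnK leq_addr.
rewrite -(bin_fact le_a) -(bin_fact le_c) /tetra.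
have -> : (c + a + b - a - c = b)%N by rewrite addnAC addnK addKn.
ring.
Qed.

Lemma trinom_tetra k a b c : (c + a + b)%N = k -> trinom k c a b = tetra k a c.
Proof.
by move=> <-; rewrite /trinom -tetra_fact mulnK // !muln_gt0 !fact_gt0.
Qed.

Lemma big_nat_shift (V : nmodType) (F : nat -> V) N :
  F 0%N = 0 -> F N = 0 -> \sum_(0 <= a < N) F a = \sum_(0 <= a < N) F a.+1.
Proof.
case: N => [|N] F0 FN; first by rewrite !big_geq.
by rewrite big_nat_recl // big_nat_recr //= F0 FN add0r addr0.
Qed.

(* Any range N > k works, so the induction hypothesis and the goal can share one range.
   Truncated subtraction in i - a matches the i.-1 of hh at i = 0. *)
Lemma hh_tetra_sum (R : realType) (t : nat -> nat -> R) k i j N : (k < N)%N ->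
  hh t k i j = \sum_(0 <= a < N) \sum_(0 <= c < N) (tetra k a c)%:R * t (i - a)%N (j + c)%N.
Proof.
elim: k i j N => [|k IHk] i j [//|N] lt_kN.
  rewrite big_nat_recl // big_nat_recl // big1 => [|c _]; last first.
    by rewrite tetra_small_r ?mul0r.
  rewrite big1 => [|a _]; last by rewrite big1 // => c _; rewrite tetra_small_l ?mul0r.
  by rewrite /tetra /= mul1r subn0 addn0 !addr0.
rewrite /= !(IHk _ _ N.+1) 1?ltnW //.
under [RHS]eq_bigr => a _.
  under eq_bigr => c _ do rewrite tetraS !natrD !mulrDl.
  rewrite !big_split /=.
  over.
rewrite !big_split /=; congr (_ + _ + _).
- rewrite [RHS]big_nat_shift /=.
  + by apply: eq_bigr => a _; apply: eq_bigr => c _; rewrite subnS predn_sub.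
  + by rewrite big1 // => c _; rewrite mul0r.
  + by rewrite big1 // => c _; rewrite tetra_small_l ?mul0r.
- apply: eq_bigr => a _; rewrite [RHS]big_nat_shift /= ?mul0r //.
  + by apply: eq_bigr => c _; rewrite addnS.
  + by rewrite tetra_small_r ?mul0r.
Qed.

Theorem theorem2 (R : realType) (t : nat -> nat -> R) (n : nat) :
  hh t n n 0 = bcoef t n.
Proof.
rewrite (hh_tetra_sum t _ _ (ltnSn n)) /bcoef big_nat_rev /=.
apply: eq_big_nat => i /andP[_]; rewrite ltnS => le_in.
rewrite add0n subSS subKn // (big_cat_nat (n := i.+1)) //=.
rewrite [X in _ + X]big1_seq ?addr0 => [|c /= ]; last first.
  rewrite mem_index_iota => /andP[lt_ic _].
  by rewrite /tetra subKn // (bin_small lt_ic) muln0 mul0r.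
apply: eq_big_nat => c /andP[_]; rewrite ltnS => le_ci.
by rewrite trinom_tetra // addnC addnA subnK // subnKC.
Qed.
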